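(* Let $B$ be a Horn program, $E^+,E^-$ finite sets of ground atoms, and $H\in\mathcal{H}_{D,C}$ a hypothesis with $tn(H,B,E^-)=|E^-|$. If $H'\in\mathcal{H}_{D,C}$ is a specialization of $H$, then $S_{ACC}(H,B,E^+,E^-)\geq S_{ACC}(H',B,E^+,E^-)$.
   Context: A definite clause is a clause with exactly one positive literal. A hypothesis is a finite set of definite clauses; $\mathcal{H}_{D,C}$ denotes the hypothesis space of hypotheses consistent with a declaration bias $D$ and hypothesis constraints $C$ (only membership matters). $B$ is background knowledge, $E^+$ positive and $E^-$ negative examples. For a hypothesis $H$: $tp(H,B,E^+)=|\{e\in E^+ : H\cup B\models e\}|$, $tn(H,B,E^-)=|\{e\in E^- : H\cup B\not\models e\}|$, and $S_{ACC}(H,B,E^+,E^-)=tp(H,B,E^+)+tn(H,B,E^-)$. A clause $C_1$ subsumes a clause $C_2$ iff there is a substitution $\theta$ with $C_1\theta\subseteq C_2$. A clausal theory $T_1$ subsumes $T_2$ ($T_1\preceq T_2$) iff every clause of $T_2$ is subsumed by some clause of $T_1$. $T_1$ is a generalization of $T_2$ iff $T_1\preceq T_2$, and a specialization of $T_2$ iff $T_2\preceq T_1$. *)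

From Stdlib Require Import List Arith ClassicalDescription.
Import ListNotations.

Inductive term : Type :=
| Var : nat -> term
| Fn : nat -> list term -> term.

Record atom : Type := mkAtom { pred : nat ; args : list term }.

(* A definite clause  head <- body_1, ..., body_k  : exactly one positive literal
   (the head) and the negative literals ~body_i. *)
Record clause : Type := mkClause { head : atom ; body : list atom }.

Definition theory := list clause.

Definition subst := nat -> term.

Fixpoint subst_term (s : subst) (t : term) : term :=
  match t with
  | Var x => s x
  | Fn f ts => Fn f (map (subst_term s) ts)
  end.

Definition subst_atom (s : subst) (a : atom) : atom :=
  mkAtom (pred a) (map (subst_term s) (args a)).

Fixpoint ground_term (t : term) : bool :=
  match t with
  | Var _ => false
  | Fn _ ts => forallb ground_term ts
  end.

Definition ground_atom (a : atom) : Prop := forallb ground_term (args a) = true.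

(* C1 subsumes C2 iff exists theta with C1 theta ⊆ C2 (as sets of literals):
   the positive literal of C1 theta is the positive literal of C2 and every
   negative literal of C1 theta is a negative literal of C2. *)
Definition clause_subsumes (c1 c2 : clause) : Prop :=
  exists theta : subst,
    subst_atom theta (head c1) = head c2 /\
    (forall b, In b (body c1) -> In (subst_atom theta b) (body c2)).

Definition theory_subsumes (T1 T2 : theory) : Prop :=
  forall c2, In c2 T2 -> exists c1, In c1 T1 /\ clause_subsumes c1 c2.

Definition specialization (T1 T2 : theory) : Prop := theory_subsumes T2 T1.

Record structure : Type := mkStructure {
  dom : Type ;
  dom_inh : dom ;
  fun_int : nat -> list dom -> dom ;
  pred_int : nat -> list dom -> Prop }.

Fixpoint eval_term (M : structure) (v : nat -> dom M) (t : term) : dom M :=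
  match t with
  | Var x => v x
  | Fn f ts => fun_int M f (map (eval_term M v) ts)
  end.

Definition holds_atom (M : structure) (v : nat -> dom M) (a : atom) : Prop :=
  pred_int M (pred a) (map (eval_term M v) (args a)).

Definition clause_true (M : structure) (c : clause) : Prop :=
  forall v : nat -> dom M,
    (forall b, In b (body c) -> holds_atom M v b) -> holds_atom M v (head c).

Definition model (M : structure) (T : theory) : Prop :=
  forall c, In c T -> clause_true M c.

Definition entails (T : theory) (a : atom) : Prop :=
  forall M : structure, model M T -> forall v : nat -> dom M, holds_atom M v a.

Definition decP (P : Prop) : bool :=
  if excluded_middle_informative P then true else false.

Definition tp (H B : theory) (Ep : list atom) : nat :=
  length (filter (fun e => decP (entails (H ++ B) e)) Ep).

Definition tn (H B : theory) (En : list atom) : nat :=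
  length (filter (fun e => negb (decP (entails (H ++ B) e))) En).

Definition S_ACC (H B : theory) (Ep En : list atom) : nat :=
  tp H B Ep + tn H B En.

From Stdlib Require Import List Lia ClassicalDescription.

(* A clause is true in every structure in which a clause subsuming it is true
   (instantiate the valuation through the subsuming substitution).  Hence a
   specialization H' of H is entailed by H, so H' ∪ B entails no more examples
   than H ∪ B: tp can only drop, while tn is always at most |E-|, which H
   already attains. *)

Fixpoint eval_term_subst (M : structure) (v : nat -> dom M) (th : subst) (t : term)
  {struct t} :
  eval_term M (fun x => eval_term M v (th x)) t = eval_term M v (subst_term th t).
Proof.
  destruct t as [x | f ts]; simpl; [reflexivity |].
  f_equal; rewrite map_map.
  induction ts as [| t ts IH]; simpl; [reflexivity |].
  now rewrite eval_term_subst, IH.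
Qed.

Lemma holds_atom_subst (M : structure) (v : nat -> dom M) (th : subst) (a : atom) :
  holds_atom M (fun x => eval_term M v (th x)) a <-> holds_atom M v (subst_atom th a).
Proof.
  unfold holds_atom, subst_atom; simpl.
  now rewrite map_map, (map_ext _ _ (eval_term_subst M v th)).
Qed.

Lemma clause_true_subsumes (M : structure) (c1 c2 : clause) :
  clause_subsumes c1 c2 -> clause_true M c1 -> clause_true M c2.
Proof.
  intros [th [Hhead Hbody]] Hc1 v Hv.
  rewrite <- Hhead; apply holds_atom_subst, Hc1.
  intros b Hb; apply holds_atom_subst, Hv, Hbody, Hb.
Qed.

Lemma model_subsumes (M : structure) (T1 T2 : theory) :
  theory_subsumes T1 T2 -> model M T1 -> model M T2.
Proof.
  intros Hsub HM c2 Hc2.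
  destruct (Hsub c2 Hc2) as [c1 [Hc1 Hc12]].
  exact (clause_true_subsumes M c1 c2 Hc12 (HM c1 Hc1)).
Qed.

Lemma entails_app_subsumes (T1 T2 B : theory) (e : atom) :
  theory_subsumes T1 T2 -> entails (T2 ++ B) e -> entails (T1 ++ B) e.
Proof.
  intros Hsub He M HM; apply He; intros c Hc.
  apply in_app_or in Hc as [Hc | Hc].
  - apply (model_subsumes M T1 T2 Hsub); [| exact Hc].
    intros c1 Hc1; apply HM, in_or_app; auto.
  - apply HM, in_or_app; auto.
Qed.

Lemma decP_true (P : Prop) : decP P = true <-> P.
Proof.
  unfold decP; destruct (excluded_middle_informative P); split; auto; discriminate.
Qed.

Lemma filter_length_mono {A : Type} (f g : A -> bool) (l : list A) :
  (forall x, f x = true -> g x = true) -> length (filter f l) <= length (filter g l).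
Proof.
  intros Hfg; induction l as [| a l IH]; simpl; [lia |].
  destruct (f a) eqn:Ha.
  - rewrite (Hfg a Ha); simpl; lia.
  - destruct (g a); simpl; lia.
Qed.

Lemma tp_subsumes (T1 T2 B : theory) (Ep : list atom) :
  theory_subsumes T1 T2 -> tp T2 B Ep <= tp T1 B Ep.
Proof.
  intros Hsub; apply filter_length_mono; intros e He.
  rewrite decP_true in He |- *.
  exact (entails_app_subsumes T1 T2 B e Hsub He).
Qed.

Lemma tn_le_length (T B : theory) (En : list atom) : tn T B En <= length En.
Proof. apply filter_length_le. Qed.

Theorem proposition4p9
  (HDC : theory -> Prop) (B : theory) (Ep En : list atom)
  (hEpfin : NoDup Ep) (hEnfin : NoDup En)
  (hEpg : forall e, In e Ep -> ground_atom e)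
  (hEng : forall e, In e En -> ground_atom e)
  (H : theory) (hH : HDC H) (htn : tn H B En = length En)
  (H' : theory) (hH' : HDC H') (hspec : specialization H' H) :
  S_ACC H B Ep En >= S_ACC H' B Ep En.
Proof.
  unfold S_ACC.
  pose proof (tp_subsumes H H' B Ep hspec) as Htp.
  pose proof (tn_le_length H' B En) as Htn'.
  lia.
Qed.
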